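(* Let $\mathcal{S}_0\subset\mathbb{R}^n$ be a compact convex set of diameter $D$, and let $f_t,g_t:\mathcal{S}_0\to\mathbb{R}$, $t=1,\dots,T$, be convex with (sub)gradients bounded in norm by $G$ and with $f_t(\theta)\le F$, $g_t(\theta)\le F$ on $\mathcal{S}_0$. For $V\ge0$ and $K\in\{1,\dots,T\}$ let $V_K$ be the set of sequences $z_1,\dots,z_T\in\mathcal{S}_0$ with $\sum_{t=2}^T\|z_t-z_{t-1}\|\le V$ and exactly $K$ indices $i$ with $g_i(z_i)\le0$, and assume $V_K\neq\emptyset$. Define $\mathcal{L}_t(\theta,\lambda)=f_t(\theta)+\lambda[g_t(\theta)]_+-\frac{\sigma\eta}2\lambda^2$ and run: $\theta_1\in\mathcal{S}_0$, $\lambda_t=[g_t(\theta_t)]_+/(\sigma\eta)$, $\theta_{t+1}=\Pi_{\mathcal{S}_0}(\theta_t-\eta\nabla_\theta\mathcal{L}_t(\theta_t,\lambda_t))$ (a subgradient; $\partial[g_t]_+=0$ where $g_t\le0$). Set $\sigma=2G^2$ and $\eta=O\big(\sqrt{(T-K+1+V)/T}\big)$. Then for any $z_1^T\in V_K$, $$\sum_{t=1}^T\big(f_t(\theta_t)-f_t(z_t)\big)\le O\big(\sqrt{T(T-K+1+V)}\big),\qquad\sum_{t=1}^T\big([g_t(\theta_t)]_+\big)^2\le O\big(\sqrt{T(T-K+1+V)}\big).$$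
   Context: $[a]_+=\max\{a,0\}$, $\Pi_{\mathcal{S}_0}$ is Euclidean projection onto $\mathcal{S}_0$. $\eta=O(\cdot)$ means $\eta=c\sqrt{(T-K+1+V)/T}$ for a constant $c>0$; the $O(\cdot)$ in the conclusions hides constants depending only on $G,F,D,c$. *)

From HB Require Import structures.
From mathcomp Require Import all_boot all_order all_algebra.
From mathcomp Require Import all_classical all_reals all_analysis.
Set Implicit Arguments. Unset Strict Implicit. Unset Printing Implicit Defensive.
Import Order.TTheory GRing.Theory Num.Theory.
Import numFieldNormedType.Exports.
Local Open Scope ring_scope.
Local Open Scope classical_set_scope.

Section Defs.
Variable R : realType.
Variable n : nat.
Notation vec := 'rV[R]_n.

Definition dotv (u v : vec) : R := \sum_(i < n) u ord0 i * v ord0 i.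
Definition enorm (u : vec) : R := Num.sqrt (dotv u u).

Definition pospart (a : R) : R := Num.max a 0.

Definition convex_set_of (S : set vec) : Prop :=
  forall x y, S x -> S y -> forall a : R, 0 <= a -> a <= 1 ->
    S (a *: x + (1 - a) *: y).

Definition convex_fun_on (S : set vec) (h : vec -> R) : Prop :=
  forall x y, S x -> S y -> forall a : R, 0 <= a -> a <= 1 ->
    h (a *: x + (1 - a) *: y) <= a * h x + (1 - a) * h y.

Definition is_subgrad_on (S : set vec) (h : vec -> R) (x d : vec) : Prop :=
  forall y, S y -> h x + dotv d (y - x) <= h y.

Definition is_euclid_proj (S : set vec) (p : vec -> vec) : Prop :=
  forall x, S (p x) /\ forall y, S y -> enorm (x - p x) <= enorm (x - y).

(* theta-subgradient of L_t(., lambda) at theta: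
   df + lambda * d[g]_+ , with d[g]_+ = 0 where g <= 0 and = dg where g > 0 *)
Definition lag_grad (f g : nat -> vec -> R) (df dg : nat -> vec -> vec)
  (t : nat) (th : vec) (lam : R) : vec :=
  df t th + (if 0 < g t th then lam else 0) *: dg t th.

Definition lam_of (g : nat -> vec -> R) (sigma eta : R) (t : nat) (th : vec) : R :=
  pospart (g t th) / (sigma * eta).

(* theta_aux k = theta_{k+1} *)
Fixpoint theta_aux (proj : vec -> vec) (f g : nat -> vec -> R)
  (df dg : nat -> vec -> vec) (sigma eta : R) (th1 : vec) (k : nat) : vec :=
  match k with
  | 0 => th1
  | k'.+1 =>
      let th := theta_aux proj f g df dg sigma eta th1 k' in
      proj (th - eta *: lag_grad f g df dg k'.+1 th (lam_of g sigma eta k'.+1 th))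
  end.

Definition theta (proj : vec -> vec) (f g : nat -> vec -> R)
  (df dg : nat -> vec -> vec) (sigma eta : R) (th1 : vec) (t : nat) : vec :=
  theta_aux proj f g df dg sigma eta th1 t.-1.

Definition in_VK (S : set vec) (g : nat -> vec -> R) (T K : nat) (V : R)
  (z : nat -> vec) : Prop :=
  (forall t, (1 <= t <= T)%N -> S (z t)) /\
  \sum_(2 <= t < T.+1) enorm (z t - z t.-1) <= V /\
  #|[set i : 'I_T.+1 | (1 <= i)%N & g i (z i) <= 0]| = K.

End Defs.

(* Write d_t = df_t(θ_t) + μ_t dg_t(θ_t) for the step direction, where μ_t = λ_t if
   g_t(θ_t) > 0 and μ_t = 0 otherwise, so that [g_t(θ_t)]_+ = σημ_t and
   μ_t g_t(θ_t) = σημ_t².  Nonexpansiveness of the projection towards z_t ∈ S0 and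
   the subgradient inequalities give
     ‖θ_{t+1} - z_t‖² ≤ ‖θ_t - z_t‖² - 2η(f_t(θ_t) - f_t(z_t)) - 2ση²μ_t²
                        + 2ημ_t g_t(z_t) + η²‖d_t‖²,
   and with σ = 2G² the term -2ση²μ_t² absorbs both the μ_t²-part of η²‖d_t‖² and,
   by AM-GM, the comparator term 2ημ_t g_t(z_t) ≤ G²η²μ_t² + [g_t(z_t)]_+²/G².
   Summing over t, the distances telescope up to the drift 3D‖z_t - z_{t-1}‖ of the
   comparator, and [g_t(z_t)]_+ vanishes except in the T - K rounds where z_t is
   infeasible, so
     2η Σ(f_t(θ_t) - f_t(z_t)) + Σ[g_t(θ_t)]_+²/(4G²)
       ≤ D² + 3DV + 2η²G²T + F²(T - K)/G² = O(T - K + 1 + V)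
   for the tuned η.  This bounds the regret at once, and bounds the violation
   after using that the regret is at least -TGD (or, if V is large, by the trivial
   bound TF²). *)

From HB Require Import structures.
From mathcomp Require Import all_boot all_order all_algebra.
From mathcomp Require Import all_classical all_reals all_analysis.
From mathcomp Require Import ring lra zify.
Import Order.TTheory GRing.Theory Num.Theory.
Import numFieldNormedType.Exports.
Local Open Scope ring_scope.
Local Open Scope classical_set_scope.
Set Implicit Arguments. Unset Strict Implicit.

Local Notation sqnorm u := (dotv u u).

Section InnerProduct.
Variables (R : realType) (n : nat).
Implicit Types (u v w : 'rV[R]_n) (a : R).

Lemma dotvC u v : dotv u v = dotv v u.
Proof. by apply: eq_bigr => i _; rewrite mulrC. Qed.

Lemma dotvDl u v w : dotv (u + v) w = dotv u w + dotv v w.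
Proof. by rewrite /dotv -big_split; apply: eq_bigr => i _; rewrite !mxE mulrDl. Qed.

Lemma dotvZl a u w : dotv (a *: u) w = a * dotv u w.
Proof. by rewrite /dotv mulr_sumr; apply: eq_bigr => i _; rewrite !mxE mulrA. Qed.

Lemma dotvNl u w : dotv (- u) w = - dotv u w.
Proof. by rewrite -scaleN1r dotvZl mulN1r. Qed.

Lemma dotvNr u w : dotv w (- u) = - dotv w u.
Proof. by rewrite dotvC dotvNl dotvC. Qed.

Lemma dotvZr a u w : dotv w (a *: u) = a * dotv w u.
Proof. by rewrite dotvC dotvZl dotvC. Qed.

Lemma dotvv_ge0 u : 0 <= sqnorm u.
Proof. by apply: sumr_ge0 => i _; rewrite -expr2 sqr_ge0. Qed.

Lemma dotvv_eq0 u : sqnorm u = 0 -> u = 0.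
Proof.
move=> /eqP; rewrite psumr_eq0 => [/allP u0|i _]; last by rewrite -expr2 sqr_ge0.
apply/rowP => i; rewrite mxE; apply/eqP.
by have := u0 i (mem_index_enum i); rewrite mulf_eq0 orbb.
Qed.

Lemma sqnormD u v : sqnorm (u + v) = sqnorm u + 2 * dotv u v + sqnorm v.
Proof. rewrite !dotvDl ![dotv _ (_ + _)]dotvC !dotvDl (dotvC u v); ring. Qed.

Lemma sqnormB u v : sqnorm (u - v) = sqnorm u - 2 * dotv u v + sqnorm v.
Proof. by rewrite sqnormD !dotvNr !dotvNl opprK mulrN. Qed.

Lemma sqnormZ a u : sqnorm (a *: u) = a ^+ 2 * sqnorm u.
Proof. by rewrite dotvZl dotvC dotvZl mulrA -expr2. Qed.

Lemma sqr_enorm u : enorm u ^+ 2 = sqnorm u.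
Proof. by rewrite sqr_sqrtr // dotvv_ge0. Qed.

Lemma enorm_ge0 u : 0 <= enorm u.
Proof. exact: sqrtr_ge0. Qed.

Lemma dotv0l w : dotv 0 w = 0.
Proof. by rewrite /dotv big1 // => i _; rewrite mxE mul0r. Qed.

Lemma dotv_sqr_le u v : dotv u v ^+ 2 <= sqnorm u * sqnorm v.
Proof.
have [->|u_neq0] := eqVneq u 0; first by rewrite !dotv0l expr0n mul0r.
set a := sqnorm u; set d := dotv u v.
have a_gt0 : 0 < a.
  by rewrite lt_def dotvv_ge0 andbT; apply: contra_neq u_neq0; apply: dotvv_eq0.
have : 0 <= a * (a * sqnorm v - d ^+ 2).
  have := dotvv_ge0 (a *: v - d *: u).
  rewrite sqnormB !sqnormZ dotvZl [dotv v (_ *: _)]dotvC dotvZl -/a -/d.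
  lra.
by rewrite pmulr_rge0 // subr_ge0 mulrC.
Qed.

Lemma CauchySchwarz_dotv u v : dotv u v <= enorm u * enorm v.
Proof.
rewrite -sqrtrM ?dotvv_ge0 //; apply: le_trans (ler_norm _) _.
by rewrite -sqrtr_sqr ler_wsqrtr // dotv_sqr_le.
Qed.

Lemma sqnormD_le u v : sqnorm (u + v) <= 2 * sqnorm u + 2 * sqnorm v.
Proof. by have := dotvv_ge0 (u - v); rewrite sqnormB sqnormD; lra. Qed.

Lemma sqnorm_le u a : enorm u <= a -> sqnorm u <= a ^+ 2.
Proof. by rewrite -sqr_enorm => u_le; have := enorm_ge0 u; nra. Qed.

Lemma sqnorm_shift_le (x z z' : 'rV[R]_n) (D : R) :
  enorm (z' - x) <= D -> enorm (z - z') <= D ->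
  sqnorm (x - z) - sqnorm (x - z') <= 3 * D * enorm (z - z').
Proof.
move=> xz' zz'; have := CauchySchwarz_dotv (z' - x) (z - z').
have e_ge0 := enorm_ge0 (z - z').
have := ler_wpM2r e_ge0 xz'; have := ler_wpM2r e_ge0 zz'.
have -> : x - z = (x - z') - (z - z') by rewrite opprB addrA subrK.
rewrite sqnormB.
have -> : dotv (x - z') (z - z') = - dotv (z' - x) (z - z') by rewrite -dotvNl opprB.
rewrite -[sqnorm (z - z')]sqr_enorm expr2; lra.
Qed.

End InnerProduct.

Lemma le0_small_multiples (R : realFieldType) (x b : R) :
  (forall e, 0 < e -> e <= 1 -> x <= e * b) -> x <= 0.
Proof.
move=> small; rewrite leNgt; apply/negP => x_gt0.
have x_le_b : x <= b by rewrite -[b]mul1r; apply: small.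
have b_gt0 : 0 < b := lt_le_trans x_gt0 x_le_b.
have e_gt0 : 0 < x / (2 * b) by rewrite divr_gt0 ?mulr_gt0.
have e_le1 : x / (2 * b) <= 1 by rewrite ler_pdivrMr ?mulr_gt0 //; lra.
have := small _ e_gt0 e_le1.
have -> : x / (2 * b) * b = x / 2 by field; rewrite gt_eqF.
lra.
Qed.

Section EuclideanProjection.
Variables (R : realType) (n : nat) (S : set 'rV[R]_n) (p : 'rV[R]_n -> 'rV[R]_n).
Hypotheses (S_convex : convex_set_of S) (p_proj : is_euclid_proj S p).

Lemma euclid_proj_obtuse y z : S z -> dotv (y - p y) (z - p y) <= 0.
Proof.
move=> z_in; have [py_in py_min] := p_proj y.
apply: (@le0_small_multiples _ _ (sqnorm (z - p y) / 2)) => e e_gt0 e_le1.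
have := py_min _ (S_convex z_in py_in (ltW e_gt0) e_le1).
have -> : y - (e *: z + (1 - e) *: p y) = (y - p y) - e *: (z - p y).
  by apply/rowP => i; rewrite !mxE; ring.
rewrite ler_sqrt ?dotvv_ge0 // [X in _ <= X]sqnormB sqnormZ dotvZr => step.
have : 0 <= e * (e * sqnorm (z - p y) - 2 * dotv (y - p y) (z - p y)) by lra.
rewrite pmulr_rge0 //; lra.
Qed.

Lemma euclid_proj_sqdist_le y z : S z -> sqnorm (p y - z) <= sqnorm (y - z).
Proof.
move=> z_in; have obtuse := euclid_proj_obtuse y z_in.
have -> : y - z = (y - p y) + (p y - z) by rewrite addrA subrK.
rewrite [X in _ <= X]sqnormD.
have -> : dotv (y - p y) (p y - z) = - dotv (y - p y) (z - p y) by rewrite -dotvNr opprB.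
have := dotvv_ge0 (y - p y); lra.
Qed.

Lemma proj_step_sqdist_le a d z e : S z ->
  sqnorm (p (a - e *: d) - z)
    <= sqnorm (a - z) - 2 * e * dotv d (a - z) + e ^+ 2 * sqnorm d.
Proof.
move=> z_in; apply: le_trans (euclid_proj_sqdist_le _ z_in) _.
have -> : a - e *: d - z = (a - z) - e *: d by rewrite addrAC.
by rewrite sqnormB sqnormZ dotvZr dotvC mulrA.
Qed.

End EuclideanProjection.

Section PositivePart.
Variable R : realType.
Implicit Type a : R.

Lemma pospart_ge a : a <= pospart a.
Proof. by rewrite /pospart le_max lexx. Qed.

Lemma pospart_id a : 0 <= a -> pospart a = a.
Proof. exact: max_l. Qed.

Lemma pospart_eq0 a : a <= 0 -> pospart a = 0.
Proof. exact: max_r. Qed.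

End PositivePart.

Definition pd_update (R : realType) (n : nat) (proj : 'rV[R]_n -> 'rV[R]_n)
    (f g : nat -> 'rV[R]_n -> R) (df dg : nat -> 'rV[R]_n -> 'rV[R]_n)
    (sigma eta : R) (t : nat) (a : 'rV[R]_n) : 'rV[R]_n :=
  proj (a - eta *: lag_grad f g df dg t a (lam_of g sigma eta t a)).

Section LagrangianStep.
Variables (R : realType) (n : nat) (S : set 'rV[R]_n) (proj : 'rV[R]_n -> 'rV[R]_n).
Hypotheses (S_convex : convex_set_of S) (proj_S : is_euclid_proj S proj).
Variables (f g : nat -> 'rV[R]_n -> R) (df dg : nat -> 'rV[R]_n -> 'rV[R]_n) (G eta : R).
Hypotheses (G_gt0 : 0 < G) (eta_gt0 : 0 < eta).

Lemma lagrangian_step t a z :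
  S z -> is_subgrad_on S (f t) a (df t a) -> is_subgrad_on S (g t) a (dg t a) ->
  enorm (df t a) <= G -> enorm (dg t a) <= G ->
  2 * eta * (f t a - f t z) + pospart (g t a) ^+ 2 / (4 * G ^+ 2)
    <= sqnorm (a - z) - sqnorm (pd_update proj f g df dg (2 * G ^+ 2) eta t a - z)
       + 2 * eta ^+ 2 * G ^+ 2 + pospart (g t z) ^+ 2 / G ^+ 2.
Proof.
move=> z_in f_sg g_sg df_le dg_le.
set mu := if 0 < g t a then lam_of g (2 * G ^+ 2) eta t a else 0.
set d := df t a + mu *: dg t a.
have descent : sqnorm (pd_update proj f g df dg (2 * G ^+ 2) eta t a - z)
    <= sqnorm (a - z) - 2 * eta * dotv d (a - z) + eta ^+ 2 * sqnorm d.
  exact: (proj_step_sqdist_le S_convex proj_S a d eta z_in).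
have [mu_ge0 pa_eq mu_ga] : [/\ 0 <= mu, pospart (g t a) = 2 * G ^+ 2 * eta * mu
                              & mu * g t a = 2 * G ^+ 2 * eta * mu ^+ 2].
  rewrite /mu /lam_of; case: ifP => [ga_gt0|/negbT].
    rewrite pospart_id ?(ltW ga_gt0) //; split.
    - by rewrite divr_ge0 // ltW // !mulr_gt0 // exprn_gt0.
    - by field; rewrite !gt_eqF.
    - by field; rewrite !gt_eqF.
  by rewrite -leNgt => /pospart_eq0 ->; split => //; ring.
have lin : f t a - f t z + mu * (g t a - g t z) <= dotv d (a - z).
  have := f_sg _ z_in; have := g_sg _ z_in.
  rewrite -[z - a]opprB !dotvNr /d dotvDl dotvZl => ga gf.
  have : mu * (g t a - g t z) <= mu * dotv (dg t a) (a - z) by apply: ler_wpM2l; lra.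
  lra.
have quad : sqnorm d <= 2 * G ^+ 2 + 2 * G ^+ 2 * mu ^+ 2.
  apply: le_trans (sqnormD_le _ _) _; rewrite sqnormZ.
  have := sqnorm_le df_le; have := sqnorm_le dg_le; have := sqr_ge0 mu; nra.
have comparator : 2 * eta * mu * g t z
    <= G ^+ 2 * eta ^+ 2 * mu ^+ 2 + pospart (g t z) ^+ 2 / G ^+ 2.
  have emu_ge0 : 0 <= 2 * eta * mu by rewrite !mulr_ge0 // ltW.
  apply: le_trans (ler_wpM2l emu_ge0 (pospart_ge (g t z))) _.
  have := sqr_ge0 (G * eta * mu - pospart (g t z) / G).
  have -> : (G * eta * mu - pospart (g t z) / G) ^+ 2
    = G ^+ 2 * eta ^+ 2 * mu ^+ 2 - 2 * eta * mu * pospart (g t z)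
      + pospart (g t z) ^+ 2 / G ^+ 2 by field; rewrite gt_eqF.
  lra.
have -> : pospart (g t a) ^+ 2 / (4 * G ^+ 2) = G ^+ 2 * eta ^+ 2 * mu ^+ 2.
  by rewrite pa_eq; field; rewrite gt_eqF.
have := ler_wpM2l (ltW (mulr_gt0 (ltr0Sn _ 1) eta_gt0)) lin.
have := ler_wpM2l (sqr_ge0 eta) quad.
have : 2 * eta * (mu * g t a) = 4 * G ^+ 2 * eta ^+ 2 * mu ^+ 2 by rewrite mu_ga; ring.
lra.
Qed.

End LagrangianStep.

Lemma sumr_telescope_shift (R : zmodType) (u w : nat -> R) T : (0 < T)%N ->
  \sum_(1 <= t < T.+1) (u t - w t)
    = u 1%N - w T + \sum_(2 <= t < T.+1) (u t - w t.-1).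
Proof.
elim: T => [//|[|T] IH] _; first by rewrite big_nat1 big_geq // addr0.
rewrite big_nat_recr // IH // [in RHS]big_nat_recr //=.
by rewrite (AC (3*2) ((1*5)*(3*(4*2)))).
Qed.

Lemma sumr_const_nat1 (R : pzRingType) (x : R) T : \sum_(1 <= t < T.+1) x = T%:R * x.
Proof. by rewrite sumr_const_nat subSS subn0 mulr_natl. Qed.

Lemma card_ord_pred_sum (P : pred nat) T :
  #|[set i : 'I_T.+1 | (1 <= i)%N & P i]| = (\sum_(1 <= t < T.+1) P t)%N.
Proof.
rewrite -sum1_card; under eq_bigl do rewrite inE.
rewrite -(big_mkord (fun i => (0 < i)%N && P i) (fun=> 1%N)) big_ltn_cond //= big_mkcond.
by apply: eq_big_nat => t /andP[-> _]; case: (P t).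
Qed.

Section PrimalDualAlgorithm.
Variables (R : realType) (n : nat) (S0 : set 'rV[R]_n) (proj : 'rV[R]_n -> 'rV[R]_n).
Hypotheses (S0_convex : convex_set_of S0) (proj_S0 : is_euclid_proj S0 proj).
Variables (G F D : R) (T K : nat) (V : R).
Variables (f g : nat -> 'rV[R]_n -> R) (df dg : nat -> 'rV[R]_n -> 'rV[R]_n).
Hypothesis G_gt0 : 0 < G.
Hypothesis S0_diam : forall x y, S0 x -> S0 y -> enorm (x - y) <= D.
Hypothesis fg_regular : forall t x, (1 <= t <= T)%N -> S0 x ->
  [/\ is_subgrad_on S0 (f t) x (df t x), is_subgrad_on S0 (g t) x (dg t x),
      enorm (df t x) <= G, enorm (dg t x) <= G & g t x <= F].
Variables (eta : R) (th1 : 'rV[R]_n) (z : nat -> 'rV[R]_n).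
Hypotheses (eta_gt0 : 0 < eta) (th1_in : S0 th1).
Hypothesis z_in : forall t, (1 <= t <= T)%N -> S0 (z t).
Hypothesis z_path : \sum_(2 <= t < T.+1) enorm (z t - z t.-1) <= V.
Hypothesis z_count : #|[set i : 'I_T.+1 | (1 <= i)%N & g i (z i) <= 0]| = K.
Hypothesis T_gt0 : (0 < T)%N.

Local Notation th := (theta proj f g df dg (2 * G ^+ 2) eta th1).

Lemma theta_in t : S0 (th t).
Proof. by rewrite /theta; elim: t.-1 => [|k _] //=; apply: (proj_S0 _).1. Qed.

Lemma thetaS t : (0 < t)%N -> th t.+1 = pd_update proj f g df dg (2 * G ^+ 2) eta t (th t).
Proof. by case: t. Qed.

Lemma regret_ge : - (T%:R * (G * D)) <= \sum_(1 <= t < T.+1) (f t (th t) - f t (z t)).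
Proof.
rewrite -mulrN -sumr_const_nat1; apply: ler_sum_nat => t t_range.
have [f_sg _ df_le _ _] := fg_regular t_range (z_in t_range).
have := f_sg _ (theta_in t); have := CauchySchwarz_dotv (df t (z t)) (z t - th t).
have := ler_pM (enorm_ge0 _) (enorm_ge0 _) df_le (S0_diam (z_in t_range) (theta_in t)).
have -> : dotv (df t (z t)) (th t - z t) = - dotv (df t (z t)) (z t - th t).
  by rewrite -dotvNr opprB.
lra.
Qed.

Lemma violation_le : \sum_(1 <= t < T.+1) pospart (g t (th t)) ^+ 2 <= T%:R * F ^+ 2.
Proof.
rewrite -[T%:R * _]sumr_const_nat1; apply: ler_sum_nat => t t_range.
have [_ _ _ _ gF] := fg_regular t_range (theta_in t).
have [g_le0|g_gt0] := leP (g t (th t)) 0; first by rewrite pospart_eq0 // expr0n sqr_ge0.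
by rewrite pospart_id ?(ltW g_gt0) // !expr2 ler_pM // ltW.
Qed.

Lemma comparator_violation_le :
  \sum_(1 <= t < T.+1) pospart (g t (z t)) ^+ 2 <= F ^+ 2 * (T%:R - K%:R).
Proof.
have infeasible : \sum_(1 <= t < T.+1) (~~ (g t (z t) <= 0))%:R = T%:R - K%:R :> R.
  rewrite -z_count (card_ord_pred_sum (fun t => g t (z t) <= 0)) natr_sum.
  rewrite -[T%:R]mulr1 -sumr_const_nat1 -sumrB.
  by apply: eq_bigr => t _; case: (g t (z t) <= 0); rewrite ?subrr ?subr0.
rewrite -infeasible mulr_sumr; apply: ler_sum_nat => t t_range.
have [_ _ _ _ gF] := fg_regular t_range (z_in t_range).
have [g_le0|g_gt0] := leP (g t (z t)) 0; first by rewrite pospart_eq0 // expr0n mulr0.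
by rewrite pospart_id ?(ltW g_gt0) // mulr1 !expr2 ler_pM // ltW.
Qed.

Lemma sum_sqdist_le :
  \sum_(1 <= t < T.+1) (sqnorm (th t - z t) - sqnorm (th t.+1 - z t)) <= D ^+ 2 + 3 * D * V.
Proof.
have D_ge0 : 0 <= D := le_trans (enorm_ge0 _) (S0_diam th1_in th1_in).
have z1_in : S0 (z 1%N) by apply: z_in; rewrite leqnn.
rewrite (sumr_telescope_shift (fun t => sqnorm (th t - z t)) _ T_gt0) /=.
have first_le := sqnorm_le (S0_diam (theta_in 1) z1_in).
have last_ge0 := dotvv_ge0 (th T.+1 - z T).
have : \sum_(2 <= t < T.+1) (sqnorm (th t - z t) - sqnorm (th t.-1.+1 - z t.-1))
    <= \sum_(2 <= t < T.+1) 3 * D * enorm (z t - z t.-1).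
  apply: ler_sum_nat => t t_range.
  have t_in : (1 <= t <= T)%N by lia.
  have t1_in : (1 <= t.-1 <= T)%N by lia.
  rewrite prednK; last by lia.
  apply: sqnorm_shift_le; apply: S0_diam; by [apply: z_in | apply: theta_in].
rewrite -mulr_sumr; have := ler_wpM2l (mulr_ge0 (ler0n _ 3) D_ge0) z_path.
lra.
Qed.

Lemma regret_violation_tradeoff :
  2 * eta * \sum_(1 <= t < T.+1) (f t (th t) - f t (z t))
  + (\sum_(1 <= t < T.+1) pospart (g t (th t)) ^+ 2) / (4 * G ^+ 2)
  <= D ^+ 2 + 3 * D * V + 2 * eta ^+ 2 * G ^+ 2 * T%:R + F ^+ 2 * (T%:R - K%:R) / G ^+ 2.
Proof.
have step t : (1 <= t < T.+1)%N ->
    2 * eta * (f t (th t) - f t (z t)) + pospart (g t (th t)) ^+ 2 / (4 * G ^+ 2)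
    <= (sqnorm (th t - z t) - sqnorm (th t.+1 - z t)) + 2 * eta ^+ 2 * G ^+ 2
       + pospart (g t (z t)) ^+ 2 / G ^+ 2.
  move=> t_range; have [f_sg g_sg df_le dg_le _] := fg_regular t_range (theta_in t).
  rewrite thetaS; last by case/andP: t_range.
  exact: (lagrangian_step S0_convex proj_S0 G_gt0 eta_gt0 (z_in t_range)).
rewrite mulr_sumr mulr_suml -big_split /=; apply: le_trans (ler_sum_nat step) _.
rewrite big_split /= big_split /= sumr_const_nat1 -mulr_suml.
have G2inv_ge0 : 0 <= (G ^+ 2)^-1 by rewrite invr_ge0 ltW // exprn_gt0.
have := ler_wpM2r G2inv_ge0 comparator_violation_le; have := sum_sqdist_le.
lra.
Qed.

End PrimalDualAlgorithm.

Definition tradeoff_const (R : realFieldType) (G F D c : R) : R :=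
  D ^+ 2 + 3 * D + 2 * c ^+ 2 * G ^+ 2 + F ^+ 2 / G ^+ 2.

Definition bound_const (R : realFieldType) (G F D c : R) : R :=
  let M := tradeoff_const G F D c in
  M / (2 * c) + 4 * G ^+ 2 * M + 8 * G ^+ 3 * D * c + F ^+ 2.

Section StepSizeTuning.
Variables (R : realType) (G F D c Tr Kr V : R).
Hypotheses (G_gt0 : 0 < G) (c_gt0 : 0 < c) (D_ge0 : 0 <= D) (V_ge0 : 0 <= V).
Hypotheses (Kr_ge1 : 1 <= Kr) (Kr_le_Tr : Kr <= Tr).

(* [lra] and [nra] ignore section hypotheses; the needed ones are moved into the goal. *)

Local Notation Q := (Tr - Kr + 1 + V).
Local Notation eta := (c * Num.sqrt (Q / Tr)).
Local Notation s := (Num.sqrt (Tr * Q)).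
Local Notation M := (tradeoff_const G F D c).

Let Tr_gt0 : 0 < Tr. Proof. exact: lt_le_trans ltr01 (le_trans Kr_ge1 Kr_le_Tr). Qed.
Let Q_ge1 : 1 <= Q. Proof. by move: Kr_le_Tr V_ge0; lra. Qed.
Let Q_ge0 : 0 <= Q. Proof. exact: le_trans ler01 Q_ge1. Qed.
Let QTr_ge0 : 0 <= Q / Tr. Proof. exact: divr_ge0 Q_ge0 (ltW Tr_gt0). Qed.

Let sqrt_horizon : s = Num.sqrt (Q / Tr) * Tr.
Proof.
rewrite (_ : Tr * Q = Q / Tr * Tr ^+ 2); last by field; rewrite gt_eqF.
by rewrite sqrtrM // sqrtr_sqr gtr0_norm.
Qed.

Lemma step_size_gt0 : 0 < eta.
Proof. by rewrite mulr_gt0 // sqrtr_gt0 divr_gt0 // (lt_le_trans ltr01 Q_ge1). Qed.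

Lemma step_size_sqr : eta ^+ 2 * Tr = c ^+ 2 * Q.
Proof. by rewrite exprMn sqr_sqrtr //; field; rewrite gt_eqF. Qed.

Lemma step_size_horizon : eta * Tr = c * s.
Proof. by rewrite sqrt_horizon mulrA. Qed.

Lemma step_size_sqrt : eta * s = c * Q.
Proof.
rewrite sqrt_horizon (_ : c * _ * (_ * Tr) = c * (Num.sqrt (Q / Tr) ^+ 2 * Tr)).
  by rewrite sqr_sqrtr // divfK // gt_eqF.
by rewrite expr2; ring.
Qed.

Lemma budget_or_horizon_le_sqrt : Q <= s \/ Tr <= s.
Proof.
have s_sqr : s ^+ 2 = Tr * Q by rewrite sqr_sqrtr // mulr_ge0 // ltW.
have s_ge0 : 0 <= s := sqrtr_ge0 _.
have := Q_ge0; have := Tr_gt0.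
have [Q_le|Tr_lt] := leP Q Tr; [left|right]; nra.
Qed.

Lemma tradeoff_le :
  D ^+ 2 + 3 * D * V + 2 * eta ^+ 2 * G ^+ 2 * Tr + F ^+ 2 * (Tr - Kr) / G ^+ 2
    <= M * Q.
Proof.
have := step_size_sqr.
have : D ^+ 2 <= D ^+ 2 * Q by rewrite ler_peMr // sqr_ge0.
have : D * V <= D * Q by rewrite ler_wpM2l //; move: Kr_le_Tr; lra.
have : F ^+ 2 * (Tr - Kr) / G ^+ 2 <= F ^+ 2 / G ^+ 2 * Q.
  by rewrite mulrAC ler_wpM2l ?divr_ge0 ?sqr_ge0 //; move: Kr_ge1 V_ge0; lra.
rewrite /tradeoff_const; nra.
Qed.

Lemma tuned_bounds SF SP :
  2 * eta * SF + SP / (4 * G ^+ 2)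
    <= D ^+ 2 + 3 * D * V + 2 * eta ^+ 2 * G ^+ 2 * Tr + F ^+ 2 * (Tr - Kr) / G ^+ 2 ->
  - (Tr * (G * D)) <= SF -> 0 <= SP -> SP <= Tr * F ^+ 2 ->
  SF <= bound_const G F D c * s /\ SP <= bound_const G F D c * s.
Proof.
move=> /le_trans/(_ tradeoff_le) tradeoff SF_ge SP_ge0 SP_le.
have eta_gt0 := step_size_gt0; have s_ge0 : 0 <= s := sqrtr_ge0 _.
have eta_s := step_size_sqrt; have eta_Tr := step_size_horizon.
have G2_gt0 : 0 < G ^+ 2 := exprn_gt0 2 G_gt0.
have M_ge0 : 0 <= M.
  rewrite /tradeoff_const; have := D_ge0; have := sqr_ge0 D.
  have := mulr_ge0 (sqr_ge0 c) (ltW G2_gt0); have := divr_ge0 (sqr_ge0 F) (ltW G2_gt0).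
  lra.
have SP4_ge0 : 0 <= SP / (4 * G ^+ 2) by rewrite divr_ge0 // ltW // mulr_gt0.
have SF_le : SF <= M / (2 * c) * s.
  have : eta * (2 * SF) <= eta * (M / c * s).
    rewrite (_ : eta * (M / c * s) = M * (eta * s) / c); last by ring.
    rewrite step_size_sqrt (_ : M * (c * Q) / c = M * Q); last by field; rewrite gt_eqF.
    lra.
  rewrite ler_pM2l // (_ : M / (2 * c) = M / c / 2); last by field; rewrite gt_eqF.
  lra.
have SP_le' : SP <= 4 * G ^+ 2 * M * Q + 8 * G ^+ 3 * D * c * s.
  have eta_SF_ge := ler_wpM2l (ltW eta_gt0) SF_ge.
  have eta_TGD : eta * (Tr * (G * D)) = c * s * G * D by rewrite mulrA eta_Tr !mulrA.
  have : SP / (4 * G ^+ 2) <= M * Q + 2 * c * s * G * D by lra.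
  rewrite ler_pdivrMr ?mulr_gt0 //; lra.
have G3Dc_ge0 : 0 <= G ^+ 3 * D * c by rewrite !mulr_ge0 // ?exprn_ge0 // ltW.
have GM_ge0 : 0 <= 4 * G ^+ 2 * M by rewrite !mulr_ge0 // ltW.
have := mulr_ge0 (divr_ge0 M_ge0 (ltW (mulr_gt0 (ltr0Sn _ 1) c_gt0))) s_ge0.
have := mulr_ge0 (sqr_ge0 F) s_ge0; have := mulr_ge0 G3Dc_ge0 s_ge0.
have := mulr_ge0 GM_ge0 s_ge0.
have -> : bound_const G F D c * s
    = M / (2 * c) * s + 4 * G ^+ 2 * M * s + 8 * G ^+ 3 * D * c * s + F ^+ 2 * s.
  by rewrite /bound_const; ring.
split; first lra.
have [Q_le|Tr_le] := budget_or_horizon_le_sqrt.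
  by have := ler_wpM2l GM_ge0 Q_le; lra.
by have := ler_wpM2r (sqr_ge0 F) Tr_le; lra.
Qed.

End StepSizeTuning.

Unset Implicit Arguments.

Theorem theorem5p3 (R : realType) (G F D c : R) (hG : 0 < G) (hc : 0 < c) :
  exists C : R, forall (n : nat) (S0 : set 'rV[R]_n),
  compact S0 -> convex_set_of S0 ->
  (forall x y, S0 x -> S0 y -> enorm (x - y) <= D) ->
  forall (proj : 'rV[R]_n -> 'rV[R]_n), is_euclid_proj S0 proj ->
  forall (T K : nat) (V : R) (f g : nat -> 'rV[R]_n -> R)
         (df dg : nat -> 'rV[R]_n -> 'rV[R]_n),
  (forall t, (1 <= t <= T)%N ->
     [/\ convex_fun_on S0 (f t), convex_fun_on S0 (g t)
       & forall x, S0 x ->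
           [/\ is_subgrad_on S0 (f t) x (df t x), is_subgrad_on S0 (g t) x (dg t x),
               enorm (df t x) <= G & enorm (dg t x) <= G]
           /\ (f t x <= F /\ g t x <= F)]) ->
  0 <= V -> (1 <= K <= T)%N ->
  (exists z, in_VK S0 g T K V z) ->
  forall (th1 : 'rV[R]_n), S0 th1 ->
  let sigma := 2 * G ^+ 2 in
  let eta := c * Num.sqrt ((T%:R - K%:R + 1 + V) / T%:R) in
  let th := theta proj f g df dg sigma eta th1 in
  forall z, in_VK S0 g T K V z ->
    \sum_(1 <= t < T.+1) (f t (th t) - f t (z t))
      <= C * Num.sqrt (T%:R * (T%:R - K%:R + 1 + V))
    /\ \sum_(1 <= t < T.+1) (pospart (g t (th t))) ^+ 2
      <= C * Num.sqrt (T%:R * (T%:R - K%:R + 1 + V)).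
Proof.
exists (bound_const G F D c).
move=> n S0 _ S0_convex S0_diam proj proj_S0 T K V f g df dg fg_hyp V_ge0
  /andP[K_ge1 K_le_T] _ th1 th1_in sigma eta th z [z_in [z_path z_count]].
have fg_regular t x : (1 <= t <= T)%N -> S0 x ->
    [/\ is_subgrad_on S0 (f t) x (df t x), is_subgrad_on S0 (g t) x (dg t x),
        enorm (df t x) <= G, enorm (dg t x) <= G & g t x <= F].
  by move=> /fg_hyp[_ _ reg] /reg[[? ? ? ?] [_ ?]].
have T_gt0 : (0 < T)%N := leq_trans K_ge1 K_le_T.
have D_ge0 : 0 <= D := le_trans (enorm_ge0 _) (S0_diam _ _ th1_in th1_in).
have Kr_ge1 : 1 <= K%:R :> R by rewrite ler1n.
have Kr_le_Tr : K%:R <= T%:R :> R by rewrite ler_nat.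
have eta_gt0 : 0 < eta := step_size_gt0 hc V_ge0 Kr_ge1 Kr_le_Tr.
apply: (tuned_bounds hG hc D_ge0 V_ge0 Kr_ge1 Kr_le_Tr).
- exact: (regret_violation_tradeoff S0_convex proj_S0 hG S0_diam fg_regular
    eta_gt0 th1_in z_in z_path z_count T_gt0).
- exact: (regret_ge proj_S0 S0_diam fg_regular eta th1_in z_in).
- by apply: sumr_ge0 => t _; apply: sqr_ge0.
- exact: (violation_le proj_S0 fg_regular eta th1_in).
Qed.
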